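(* Let $m,n,a$ be natural numbers with $n\geq 1$, $m\geq 1$ and $1\leq a\leq 9$. Then the equation $$C_n = a\left(\frac{10^m-1}{9}\right)$$ holds if and only if $(m,n,a)\in\{(1,1,3),(2,3,9)\}$. That is, the only Lucas-balancing numbers $C_n$ with $n\ge 1$ that are decimal repdigits are $C_1=3$ and $C_3=99$.
   Context: The Lucas-balancing sequence $(C_n)_{n\geq 0}$ is defined by $C_0=1$, $C_1=3$ and $C_{n+1}=6C_n-C_{n-1}$ for $n\geq 1$. For $1\le a\le 9$ and $m\ge 1$, the number $a\frac{10^m-1}{9}$ is the decimal integer consisting of $m$ copies of the digit $a$. *)

From mathcomp Require Import all_boot.

(* The truncated nat subtraction is harmless
   since 6 * C (n+1) > C n for all n (the sequence is increasing). *)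
Fixpoint Cpair (n : nat) : nat * nat :=
  match n with
  | 0 => (1, 3)
  | n'.+1 => let: (x, y) := Cpair n' in (y, 6 * y - x)
  end.

Definition C (n : nat) : nat := (Cpair n).1.

Definition repdigit (a m : nat) : nat := a * ((10 ^ m - 1) %/ 9).

Lemma C0 : C 0 = 1. Proof. by []. Qed.
Lemma C1 : C 1 = 3. Proof. by []. Qed.
Lemma C3 : C 3 = 99. Proof. by []. Qed.

(* For m >= 6, 2^6 divides 10^m, so 9 C_n + a = a 10^m forces 9 C_n + a = 0 (mod 64).
   Modulo 64 the sequence C_n only takes the values 1, 3, 17, 35, which leaves a = 5;
   but then 5 divides C_n, whereas C_n is never 0 modulo 5. For m <= 5 the repdigit is
   at most 99999 < C_7, so only n <= 6 remain, and these are checked directly. *)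
From mathcomp Require Import all_boot zify.

Lemma Cpair_eq n : Cpair n = (C n, C n.+1).
Proof. by rewrite /C /=; case: (Cpair n). Qed.

Lemma C_SS n : C n.+2 = 6 * C n.+1 - C n.
Proof. by rewrite {1}/C /= Cpair_eq. Qed.

Lemma C_lt n : C n < C n.+1.
Proof. by elim: n => [|n IH] //; rewrite C_SS; lia. Qed.

Lemma C_rec n : C n.+2 + C n = 6 * C n.+1.
Proof. have := C_lt n; have := C_lt n.+1; rewrite C_SS; lia. Qed.

Lemma C_homo : {homo C : i j / i <= j}.
Proof. exact: (@homo_leq _ C leq leqnn leq_trans (fun i => ltnW (C_lt i))). Qed.

(* [S] is a set of residue pairs closed under (x, y) |-> (y, 6 y - x) modulo [M];
   the subtraction is encoded by quantifying over the residue [z] of the next term. *)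
Definition rec_closed (M : nat) (S : seq (nat * nat)) : bool :=
  all (fun p => all (fun z => ((z + p.1) %% M == 6 * p.2 %% M) ==> ((p.2, z) \in S))
                    (iota 0 M)) S.

Lemma C_mod_pair_in M S n : 0 < M -> (1 %% M, 3 %% M) \in S -> rec_closed M S ->
  (C n %% M, C n.+1 %% M) \in S.
Proof.
move=> M_gt0 S_init /allP S_closed; elim: n => [|n IH] //.
have /allP/(_ (C n.+2 %% M)) := S_closed _ IH.
rewrite mem_iota ltn_pmod // => /(_ isT) /implyP; apply.
by rewrite /= modnDml modnDmr C_rec modnMmr.
Qed.

Lemma C_mod_in M (S : seq (nat * nat)) (r : seq nat) n :
  0 < M -> (1 %% M, 3 %% M) \in S -> rec_closed M S ->
  all (fun x => x \in r) [seq p.1 | p <- S] -> C n %% M \in r.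
Proof.
move=> M_gt0 S_init S_closed /allP S_r.
exact: S_r (map_f fst (C_mod_pair_in _ _ n M_gt0 S_init S_closed)).
Qed.

Lemma C_mod64 n : C n %% 64 \in [:: 1; 3; 17; 35].
Proof.
by apply: (@C_mod_in 64
  [:: (1, 3); (3, 17); (17, 35); (35, 1); (1, 35); (35, 17); (17, 3); (3, 1)]).
Qed.

Lemma C_not_dvd5 n : ~~ (5 %| C n).
Proof.
have : C n %% 5 \in [:: 1; 2; 3; 4].
  by apply: (@C_mod_in 5 [:: (1, 3); (3, 2); (2, 4); (4, 2); (2, 3); (3, 1)]).
by rewrite /dvdn !inE; case: (C n %% 5).
Qed.

Lemma repdigit_spec a m : 9 * repdigit a m + a = a * 10 ^ m.
Proof.
have ten_mod9 : 10 ^ m %% 9 = 1 by rewrite -modnXm exp1n.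
have q_eq : (10 ^ m - 1) %/ 9 = 10 ^ m %/ 9.
  by rewrite {1}(divn_eq (10 ^ m) 9) ten_mod9 addnK mulnK.
rewrite /repdigit q_eq mulnCA -{2}(muln1 a) -mulnDr.
by rewrite {2}(divn_eq (10 ^ m) 9) ten_mod9 (mulnC 9).
Qed.

Lemma repdigit_mono a a' m m' : a <= a' -> m <= m' -> repdigit a m <= repdigit a' m'.
Proof.
move=> le_a le_m; rewrite /repdigit leq_mul // leq_div2r // leq_sub2r //.
exact: leq_pexp2l.
Qed.

Lemma C_ne_long_repdigit n a m : 6 <= m -> 1 <= a <= 9 -> C n != repdigit a m.
Proof.
move=> m_ge6 /andP[a_gt0 a_le9]; apply/eqP => E.
have eq10 : 9 * C n + a = a * 10 ^ m by rewrite E repdigit_spec.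
have dvd64 : 64 %| 9 * C n + a.
  by rewrite eq10 dvdn_mull // -(subnK m_ge6) expnD dvdn_mull.
have a5 : a = 5.
  move: (C_mod64 n) dvd64; rewrite /dvdn -modnDml -modnMmr !inE.
  case/or4P=> /eqP -> /eqP; lia.
subst a; have : 5 %| 9 * C n by rewrite -(dvdn_addl _ (dvdnn 5)) eq10 dvdn_mulr.
by rewrite Gauss_dvdr // (negPf (C_not_dvd5 n)).
Qed.

Lemma C_repdigit_small n a m : 1 <= n <= 6 -> 1 <= m <= 5 -> 1 <= a <= 9 ->
  C n = repdigit a m -> (m, n, a) \in [:: (1, 1, 3); (2, 3, 9)].
Proof.
have table : all (fun n => all (fun m => all (fun a =>
    (C n == repdigit a m) ==> ((m, n, a) \in [:: (1, 1, 3); (2, 3, 9)]))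
    (iota 1 9)) (iota 1 5)) (iota 1 6) by vm_compute.
move=> n_range m_range a_range /eqP E.
have in_iota1 k b : 1 <= k <= b -> k \in iota 1 b by rewrite mem_iota add1n ltnS.
move/allP/(_ n (in_iota1 _ _ n_range)): table.
move/allP/(_ m (in_iota1 _ _ m_range)).
by move/allP/(_ a (in_iota1 _ _ a_range)); rewrite E.
Qed.

Theorem theorem3 (m n a : nat) :
  1 <= n -> 1 <= m -> 1 <= a <= 9 ->
  (C n = repdigit a m <->
   ((m, n, a) = (1, 1, 3) \/ (m, n, a) = (2, 3, 9))).
Proof.
move=> n_gt0 m_gt0 a_range; split; last first.
  by case=> [[-> -> ->]|[-> -> ->]]; vm_compute.
move=> E; have m_le5 : m <= 5.
  by rewrite leqNgt; apply/negP => /(C_ne_long_repdigit n)/(_ a_range); rewrite E eqxx.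
have n_le6 : n <= 6.
  rewrite leqNgt; apply/negP => n_ge7.
  suff : C 7 <= repdigit 9 5 by vm_compute.
  by rewrite (leq_trans (C_homo _ _ n_ge7)) // E repdigit_mono //; case/andP: a_range.
move: (@C_repdigit_small n a m); rewrite n_gt0 n_le6 m_gt0 m_le5 !inE.
by move=> /(_ isT isT a_range E) /orP[] /eqP; [left | right].
Qed.
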